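(* Let $a=p/q\geq1$ be rational with $p,q$ coprime, and let $(d,e;m)\in\mathcal{E}$. Define the error vector $\varepsilon$ by $m=\frac{d+e}{\sqrt{2a}}\,w(a)+\varepsilon$ (vectors padded with zeros to a common length). Then: (i) $\mu(d,e;m)(a)\leq\frac{\sqrt{2de+1}\sqrt a}{d+e}$. In particular $\mu(d,d;m)(a)\leq\sqrt{1+\frac{1}{2d^2}}\sqrt{\frac a2}$, and if $e=d-1$ then $\mu(d,e;m)(a)\leq\sqrt{1+\frac{1}{(2d-1)^2}}\sqrt{\frac a2}$. (ii) $\mu(d,e;m)(a)>\sqrt{a/2}$ if and only if $\langle\varepsilon,w(a)\rangle>0$. (iii) If $e=d$ and $\mu(d,e;m)(a)>\sqrt{a/2}$, then $\langle\varepsilon,\varepsilon\rangle<1$; if $e=d-1$ and $\mu(d,e;m)(a)>\sqrt{a/2}$, then $\langle\varepsilon,\varepsilon\rangle<\frac12$. (iv) The sum of all entries of $\varepsilon$ satisfies $-\sum_i\varepsilon_i=\frac{d+e}{\sqrt{2a}}\left(y(a)-\frac1q\right)+1$, where $y(a):=a+1-2\sqrt{2a}$.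
   Context: Weight expansion: for rational $a=p/q\geq1$ in lowest terms with continued fraction $[l_0;l_1,\dots,l_N]$ ($l_N\geq2$ if $N\geq1$), $w(a)=(1^{\times l_0},x_1^{\times l_1},\dots,x_N^{\times l_N})$ with $x_0=1$, $x_1=a-l_0$, $x_i=x_{i-2}-l_{i-1}x_{i-1}$; $x^{\times l}$ is $x$ repeated $l$ times. The set $\mathcal{E}$: a Cremona transform of an integer tuple $(\delta;n_1,\dots,n_k)$ with $n_1\geq\dots\geq n_k$ is $(2\delta-n_1-n_2-n_3;\delta-n_2-n_3,\delta-n_1-n_3,\delta-n_1-n_2,n_4,\dots,n_k)$; a Cremona move is a Cremona transform followed by a permutation of the entries after the semicolon. $\mathcal{E}$ consists of $(0,0;-1)$ together with all integer tuples $(d,e;m_1,\dots,m_M)$ with $d,e\geq0$, $m_1\geq\dots\geq m_M\geq0$, satisfying $\sum m_i=2(d+e)-1$, $\sum m_i^2=2de+1$, and such that $(d+e-m_1;d-m_1,e-m_1,m_2,\dots,m_M)$ reduces to $(0;-1,0,\dots,0)$ by repeated Cremona moves. $\mu(d,e;m)(a):=\langle m,w(a)\rangle/(d+e)$, with $\langle\cdot,\cdot\rangle$ the Euclidean scalar product after padding with zeros. *)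

From Stdlib Require Import Reals Lra Lia ZArith Arith List Permutation Sorted Relations.
Import ListNotations.
Open Scope R_scope.

Fixpoint cf_val (ls : list nat) : R :=
  match ls with
  | [] => 0
  | [l] => INR l
  | l :: rest => INR l + / cf_val rest
  end.

Definition is_cf (ls : list nat) (a : R) : Prop :=
  ls <> [] /\
  Forall (fun l => (1 <= l)%nat) (tl ls) /\
  ((2 <= length ls)%nat -> (2 <= last ls 0)%nat) /\
  cf_val ls = a.

(* wtail x_{i-1} x_i [l_i; ...; l_N] = (x_i^{x l_i}, x_{i+1}^{x l_{i+1}}, ...),
   with x_{i+1} = x_{i-1} - l_i x_i *)
Fixpoint wtail (xprev xcur : R) (ls : list nat) : list R :=
  match ls with
  | [] => []
  | l :: rest => repeat xcur l ++ wtail xcur (xprev - INR l * xcur) rest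
  end.

(* w(a) = (1^{x l0}, x_1^{x l1}, ..., x_N^{x lN}), x_0 = 1, x_1 = a - l0 *)
Definition weight_exp (ls : list nat) (a : R) : list R :=
  match ls with
  | [] => []
  | l0 :: rest => repeat 1 l0 ++ wtail 1 (a - INR l0) rest
  end.

Definition dotR (u v : list R) : R :=
  fold_right Rplus 0
    (map (fun i => nth i u 0 * nth i v 0) (seq 0 (Nat.max (length u) (length v)))).

Definition subR (u v : list R) : list R :=
  map (fun i => nth i u 0 - nth i v 0) (seq 0 (Nat.max (length u) (length v))).

Definition sumR (u : list R) : R := fold_right Rplus 0 u.

Definition zlistR (m : list Z) : list R := map IZR m.

Definition ctuple := (Z * list Z)%type.

Inductive cstep : ctuple -> ctuple -> Prop :=
  | cs_perm delta n n' : Permutation n n' -> cstep (delta, n) (delta, n')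
  | cs_pad delta n : cstep (delta, n) (delta, n ++ [0%Z])
  | cs_cremona delta n1 n2 n3 rest :
      Sorted Z.ge (n1 :: n2 :: n3 :: rest) ->
      cstep (delta, n1 :: n2 :: n3 :: rest)
            ((2 * delta - n1 - n2 - n3)%Z,
             (delta - n2 - n3)%Z :: (delta - n1 - n3)%Z :: (delta - n1 - n2)%Z :: rest).

Definition creduces (t : ctuple) : Prop :=
  exists k : nat, clos_refl_trans ctuple cstep t (0%Z, (-1)%Z :: repeat 0%Z k).

Definition sumZ (m : list Z) : Z := fold_right Z.add 0%Z m.
Definition sumsqZ (m : list Z) : Z := fold_right (fun x s => x * x + s)%Z 0%Z m.

Definition in_E (d e : Z) (m : list Z) : Prop :=
  (d = 0%Z /\ e = 0%Z /\ m = [(-1)%Z]) \/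
  ((0 <= d)%Z /\ (0 <= e)%Z /\ Sorted Z.ge m /\ Forall (fun x => (0 <= x)%Z) m /\
   sumZ m = (2 * (d + e) - 1)%Z /\ sumsqZ m = (2 * d * e + 1)%Z /\
   creduces ((d + e - hd 0 m)%Z, (d - hd 0 m)%Z :: (e - hd 0 m)%Z :: tl m)).

(* mu(d,e;m)(a) = <m, w(a)> / (d+e), w(a) computed from the continued fraction ls of a *)
Definition mu (d e : Z) (m : list Z) (ls : list nat) (a : R) : R :=
  dotR (zlistR m) (weight_exp ls a) / IZR (d + e).

Definition err_vec (d e : Z) (m : list Z) (ls : list nat) (a : R) : list R :=
  subR (zlistR m) (map (fun x => IZR (d + e) / sqrt (2 * a) * x) (weight_exp ls a)).

From Stdlib Require Import Reals ZArith Arith List Lra Lia.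
Import ListNotations.
Open Scope R_scope.

(* Running the Euclidean algorithm on p/q along the continued fraction shows that the
   weight vector w = w(p/q) has <w, w> = p/q and sum w = (p + q - gcd p q)/q, while
   membership in E gives <m, m> = 2de + 1 and sum m = 2(d + e) - 1.  With
   c = (d + e)/sqrt(2a) one has c^2 a = (d + e)^2/2, so expanding eps = m - c w turns
   (ii)-(iv) into identities between these four numbers, and (i) is Cauchy-Schwarz. *)

Definition isum (n : nat) (f : nat -> R) : R := fold_right Rplus 0 (map f (seq 0 n)).

Lemma isum_S n f : isum (S n) f = isum n f + f n.
Proof.
  unfold isum; rewrite seq_S, map_app, fold_right_app; simpl.
  induction (map f (seq 0 n)) as [|x l IH]; simpl; [lra | rewrite IH; lra].
Qed.

Lemma isum_shift n f : isum (S n) f = f 0%nat + isum n (fun i => f (S i)).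
Proof. unfold isum; simpl; rewrite <- seq_shift, map_map; reflexivity. Qed.

Lemma isum_ext n f g : (forall i, (i < n)%nat -> f i = g i) -> isum n f = isum n g.
Proof.
  induction n as [|n IH]; intros Hfg; [reflexivity|].
  rewrite !isum_S, (Hfg n), IH; [reflexivity | intros; apply Hfg; lia | lia].
Qed.

Lemma isum_add n f g : isum n (fun i => f i + g i) = isum n f + isum n g.
Proof. induction n as [|n IH]; [unfold isum; simpl; lra | rewrite !isum_S, IH; ring]. Qed.

Lemma isum_sub n f g : isum n (fun i => f i - g i) = isum n f - isum n g.
Proof. induction n as [|n IH]; [unfold isum; simpl; lra | rewrite !isum_S, IH; ring]. Qed.

Lemma isum_scale n c f : isum n (fun i => c * f i) = c * isum n f.
Proof. induction n as [|n IH]; [unfold isum; simpl; lra | rewrite !isum_S, IH; ring]. Qed.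

Lemma isum_le n f g : (forall i, f i <= g i) -> isum n f <= isum n g.
Proof.
  intros Hfg; induction n as [|n IH]; [unfold isum; simpl; lra|].
  rewrite !isum_S; specialize (Hfg n); lra.
Qed.

Lemma isum_nonneg n f : (forall i, 0 <= f i) -> 0 <= isum n f.
Proof.
  intros Hf; induction n as [|n IH]; [unfold isum; simpl; lra|].
  rewrite isum_S; specialize (Hf n); lra.
Qed.

Lemma isum_pad n N f :
  (n <= N)%nat -> (forall i, (n <= i)%nat -> f i = 0) -> isum N f = isum n f.
Proof.
  intros HnN Hf; induction N as [|N IH].
  - replace n with 0%nat by lia; reflexivity.
  - destruct (Nat.eq_dec n (S N)) as [-> | Hne]; [reflexivity|].
    rewrite isum_S, Hf, IH by lia; ring.
Qed.

Lemma isum_amgm n t f g : 0 < t ->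
  isum n (fun i => f i * g i)
  <= t / 2 * isum n (fun i => f i * f i) + / (2 * t) * isum n (fun i => g i * g i).
Proof.
  intros Ht; rewrite <- !isum_scale, <- isum_add; apply isum_le; intros i.
  assert (0 <= (t * f i - g i) ^ 2 / (2 * t))
    by (apply Rmult_le_pos; [apply pow2_ge_0 | left; apply Rinv_0_lt_compat; lra]).
  replace (t / 2 * (f i * f i) + / (2 * t) * (g i * g i))
    with (f i * g i + (t * f i - g i) ^ 2 / (2 * t)) by (field; lra).
  lra.
Qed.

(* In the degenerate case one side of the AM-GM bound can be made arbitrarily small:
   [t = S / (F + 1)] when [G = 0], [t = (G + 1) / S] when [F = 0]. *)
Lemma nonpos_of_amgm_bound S F G : 0 <= F -> 0 <= G -> F * G = 0 ->
  (forall t, 0 < t -> S <= t / 2 * F + / (2 * t) * G) -> S <= 0.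
Proof.
  intros HF HG HFG Hbound; apply Rnot_lt_le; intros HS.
  destruct (Rmult_integral _ _ HFG) as [-> | ->].
  - specialize (Hbound ((G + 1) / S) ltac:(apply Rdiv_lt_0_compat; lra)).
    replace ((G + 1) / S / 2 * 0 + / (2 * ((G + 1) / S)) * G)
      with (S * (G / (2 * (G + 1)))) in Hbound by (field; lra).
    assert (G / (2 * (G + 1)) < 1)
      by (apply (Rmult_lt_reg_r (2 * (G + 1))); [lra | field_simplify; lra]).
    nra.
  - specialize (Hbound (S / (F + 1)) ltac:(apply Rdiv_lt_0_compat; lra)).
    replace (S / (F + 1) / 2 * F + / (2 * (S / (F + 1))) * 0)
      with (S * (F / (2 * (F + 1)))) in Hbound by (field; lra).
    assert (F / (2 * (F + 1)) < 1)
      by (apply (Rmult_lt_reg_r (2 * (F + 1))); [lra | field_simplify; lra]).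
    nra.
Qed.

Lemma isum_cauchy_schwarz n f g :
  isum n (fun i => f i * g i)
  <= sqrt (isum n (fun i => f i * f i)) * sqrt (isum n (fun i => g i * g i)).
Proof.
  pose proof (isum_amgm n) as Hamgm.
  set (F := isum n (fun i => f i * f i)) in *; set (G := isum n (fun i => g i * g i)) in *.
  assert (HF : 0 <= F) by (apply isum_nonneg; intros; nra).
  assert (HG : 0 <= G) by (apply isum_nonneg; intros; nra).
  destruct (Rle_lt_or_eq_dec 0 (F * G)) as [HFG | HFG]; [nra | |].
  - assert (HsF : 0 < sqrt F) by (apply sqrt_lt_R0; nra).
    assert (HsG : 0 < sqrt G) by (apply sqrt_lt_R0; nra).
    replace (sqrt F * sqrt G)
      with (sqrt G / sqrt F / 2 * F + / (2 * (sqrt G / sqrt F)) * G).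
    + apply Hamgm, Rdiv_lt_0_compat; lra.
    + rewrite <- (sqrt_sqrt F HF) at 2; rewrite <- (sqrt_sqrt G HG) at 3; field; lra.
  - rewrite <- sqrt_mult, <- HFG, sqrt_0 by assumption.
    apply (nonpos_of_amgm_bound _ F G); auto.
Qed.

Lemma nth_map0 (f : R -> R) u i : f 0 = 0 -> nth i (map f u) 0 = f (nth i u 0).
Proof. intros Hf0; rewrite <- Hf0 at 1; apply map_nth. Qed.

Lemma length_subR u v : length (subR u v) = Nat.max (length u) (length v).
Proof. unfold subR; rewrite length_map, length_seq; reflexivity. Qed.

Lemma nth_subR u v i : nth i (subR u v) 0 = nth i u 0 - nth i v 0.
Proof.
  unfold subR; destruct (Nat.lt_ge_cases i (Nat.max (length u) (length v))).
  - set (f := fun j => nth j u 0 - nth j v 0).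
    rewrite nth_indep with (d' := f 0%nat) by (rewrite length_map, length_seq; lia).
    rewrite map_nth, seq_nth by lia; reflexivity.
  - rewrite !nth_overflow; [lra | lia | lia | rewrite length_map, length_seq; lia].
Qed.

Lemma sumR_isum u N : (length u <= N)%nat -> sumR u = isum N (fun i => nth i u 0).
Proof.
  revert N; induction u as [|x u IH]; intros N HN.
  - rewrite (isum_pad 0); [reflexivity | lia | intros [|i] _; reflexivity].
  - destruct N as [|N]; [simpl in HN; lia|].
    rewrite isum_shift; simpl; rewrite (IH N) by (simpl in HN; lia); reflexivity.
Qed.

Lemma dotR_isum u v N : (length u <= N)%nat -> (length v <= N)%nat ->
  dotR u v = isum N (fun i => nth i u 0 * nth i v 0).
Proof.
  intros Hu Hv; symmetry; apply isum_pad; [lia|].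
  intros i Hi; rewrite (nth_overflow u) by lia; ring.
Qed.

Lemma dotR_comm u v : dotR u v = dotR v u.
Proof.
  set (N := Nat.max (length u) (length v)).
  rewrite (dotR_isum u v N), (dotR_isum v u N) by lia.
  apply isum_ext; intros; ring.
Qed.

Lemma dotR_subR_l u v x : dotR (subR u v) x = dotR u x - dotR v x.
Proof.
  set (N := Nat.max (Nat.max (length u) (length v)) (length x)).
  rewrite (dotR_isum _ x N), (dotR_isum u x N), (dotR_isum v x N), <- isum_sub
    by (rewrite ?length_subR; lia).
  apply isum_ext; intros; rewrite nth_subR; ring.
Qed.

Lemma dotR_scale_l c u v : dotR (map (fun x => c * x) u) v = c * dotR u v.
Proof.
  set (N := Nat.max (length u) (length v)).
  rewrite (dotR_isum _ v N), (dotR_isum u v N), <- isum_scale by (rewrite ?length_map; lia).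
  apply isum_ext; intros; rewrite nth_map0 by ring; ring.
Qed.

Lemma dotR_scale_r c u v : dotR u (map (fun x => c * x) v) = c * dotR u v.
Proof. rewrite dotR_comm, dotR_scale_l, dotR_comm; reflexivity. Qed.

Lemma dotR_diag u : dotR u u = sumR (map (fun x => x * x) u).
Proof.
  rewrite (dotR_isum u u (length u)), (sumR_isum _ (length u)) by (rewrite ?length_map; lia).
  apply isum_ext; intros; rewrite nth_map0 by ring; reflexivity.
Qed.

Lemma dotR_cauchy_schwarz u v : dotR u v <= sqrt (dotR u u) * sqrt (dotR v v).
Proof.
  set (N := Nat.max (length u) (length v)).
  rewrite (dotR_isum u v N), (dotR_isum u u N), (dotR_isum v v N) by lia.
  apply isum_cauchy_schwarz.
Qed.

Lemma sumR_app u v : sumR (u ++ v) = sumR u + sumR v.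
Proof. induction u as [|x u IH]; simpl; [ring | unfold sumR in *; simpl; rewrite IH; ring]. Qed.

Lemma sumR_repeat x l : sumR (repeat x l) = INR l * x.
Proof. induction l as [|l IH]; [simpl; ring | rewrite S_INR; unfold sumR in *; simpl; rewrite IH; ring]. Qed.

Lemma sumR_scale c u : sumR (map (fun x => c * x) u) = c * sumR u.
Proof. induction u as [|x u IH]; [unfold sumR; simpl; ring | unfold sumR in *; simpl; rewrite IH; ring]. Qed.

Lemma sumR_subR u v : sumR (subR u v) = sumR u - sumR v.
Proof.
  set (N := Nat.max (length u) (length v)).
  rewrite (sumR_isum _ N), (sumR_isum u N), (sumR_isum v N), <- isum_sub
    by (rewrite ?length_subR; lia).
  apply isum_ext; intros; apply nth_subR.
Qed.

Lemma sumR_zlistR m : sumR (zlistR m) = IZR (sumZ m).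
Proof. induction m as [|x m IH]; [reflexivity | simpl; rewrite plus_IZR, <- IH; reflexivity]. Qed.

Lemma dotR_zlistR_diag m : dotR (zlistR m) (zlistR m) = IZR (sumsqZ m).
Proof.
  rewrite dotR_diag; induction m as [|x m IH]; [reflexivity|].
  simpl; rewrite plus_IZR, mult_IZR, <- IH; reflexivity.
Qed.

Lemma in_E_sums d e m : in_E d e m -> (0 < d + e)%Z ->
  sumR (zlistR m) = 2 * IZR (d + e) - 1 /\
  dotR (zlistR m) (zlistR m) = 2 * IZR d * IZR e + 1.
Proof.
  intros [[-> [-> _]] | [_ [_ [_ [_ [Hsum [Hsq _]]]]]]] Hde; [lia|].
  rewrite sumR_zlistR, dotR_zlistR_diag, Hsum, Hsq.
  split; [rewrite minus_IZR, mult_IZR | rewrite plus_IZR, !mult_IZR]; ring.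
Qed.

Lemma cf_val_ge1 ls : ls <> [] -> Forall (fun l => (1 <= l)%nat) ls -> 1 <= cf_val ls.
Proof.
  induction ls as [|l rest IH]; intros Hne Hls; [congruence|].
  inversion Hls as [|? ? Hl Hrest]; subst; apply le_INR in Hl; simpl INR in Hl.
  destruct rest as [|l' rest']; [simpl; lra|].
  change (cf_val (l :: l' :: rest')) with (INR l + / cf_val (l' :: rest')).
  assert (1 <= cf_val (l' :: rest')) by (apply IH; [congruence | assumption]).
  assert (0 < / cf_val (l' :: rest')) by (apply Rinv_0_lt_compat; lra).
  lra.
Qed.

Lemma cf_val_euclid_step l rest r s :
  rest <> [] -> Forall (fun x => (1 <= x)%nat) rest -> (0 < s)%nat ->
  cf_val (l :: rest) = INR r / INR s ->
  (l * s < r)%nat /\ cf_val rest = INR s / INR (r - l * s).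
Proof.
  intros Hne Hrest Hs Hcf.
  assert (HsR : 0 < INR s) by (apply lt_0_INR; lia).
  assert (Hv : 1 <= cf_val rest) by (apply cf_val_ge1; assumption).
  assert (Hr : INR r = INR l * INR s + INR s / cf_val rest).
  { destruct rest as [|x rest]; [congruence|].
    change (cf_val (l :: x :: rest)) with (INR l + / cf_val (x :: rest)) in Hcf.
    replace (INR r) with (INR r / INR s * INR s) by (field; lra).
    rewrite <- Hcf; field; lra. }
  assert (Hpos : 0 < INR s / cf_val rest) by (apply Rdiv_lt_0_compat; lra).
  assert (Hlt : (l * s < r)%nat) by (apply INR_lt; rewrite mult_INR; lra).
  split; [exact Hlt|].
  rewrite minus_INR, mult_INR, Hr by lia; field; lra.
Qed.

(* The entries of [wtail (r / Q) (s / Q) ls] are the successive remainders of the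
   Euclidean algorithm on (r, s), divided by Q, each repeated as often as the next
   partial quotient. *)
Lemma wtail_sums ls : forall (r s : nat) (Q : R),
  0 < Q -> ls <> [] -> Forall (fun l => (1 <= l)%nat) (tl ls) -> (0 < s)%nat ->
  cf_val ls = INR r / INR s ->
  sumR (wtail (INR r / Q) (INR s / Q) ls) = (INR r + INR s - INR (Nat.gcd r s)) / Q /\
  sumR (map (fun x => x * x) (wtail (INR r / Q) (INR s / Q) ls)) = INR r * INR s / (Q * Q).
Proof.
  induction ls as [|l rest IH]; intros r s Q HQ Hne Hrest Hs Hcf; [congruence|].
  assert (HsR : 0 < INR s) by (apply lt_0_INR; lia).
  simpl tl in Hrest.
  destruct (list_eq_dec Nat.eq_dec rest []) as [-> | Hrest_ne].
  - assert (Hr : r = (l * s)%nat).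
    { apply INR_eq; rewrite mult_INR; simpl in Hcf; rewrite Hcf; field; lra. }
    subst r; simpl wtail; rewrite app_nil_r, map_repeat, !sumR_repeat.
    rewrite Nat.gcd_comm, Nat.mul_comm, Nat.gcd_mul_diag_l, mult_INR.
    split; field; lra.
  - destruct (cf_val_euclid_step l rest r s Hrest_ne Hrest Hs Hcf) as [Hlt Hcf'].
    set (r' := (r - l * s)%nat) in *.
    assert (Hr : INR r = INR r' + INR l * INR s)
      by (unfold r'; rewrite minus_INR, mult_INR by lia; ring).
    destruct rest as [|x rest]; [congruence|].
    destruct (IH s r' Q HQ Hrest_ne ltac:(inversion Hrest; assumption) ltac:(lia) Hcf')
      as [IHsum IHsq].
    change (wtail (INR r / Q) (INR s / Q) (l :: x :: rest))
      with (repeat (INR s / Q) l ++ wtail (INR s / Q) (INR r / Q - INR l * (INR s / Q)) (x :: rest)).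
    replace (INR r / Q - INR l * (INR s / Q)) with (INR r' / Q) by (rewrite Hr; field; lra).
    rewrite map_app, map_repeat, !sumR_app, !sumR_repeat, IHsum, IHsq.
    replace (Nat.gcd r s) with (Nat.gcd s r')
      by (rewrite (Nat.gcd_comm r s); replace r with (r' + l * s)%nat by lia;
          symmetry; apply Nat.gcd_add_mult_diag_r).
    rewrite Hr; split; field; lra.
Qed.

Lemma weight_exp_sums (p q : nat) ls : (0 < q)%nat -> is_cf ls (INR p / INR q) ->
  sumR (weight_exp ls (INR p / INR q)) = (INR p + INR q - INR (Nat.gcd p q)) / INR q /\
  dotR (weight_exp ls (INR p / INR q)) (weight_exp ls (INR p / INR q)) = INR p / INR q.
Proof.
  intros Hq [Hne [Hrest [_ Hcf]]].
  assert (HqR : 0 < INR q) by (apply lt_0_INR; lia).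
  destruct ls as [|l0 rest]; [congruence|].
  assert (Hw : weight_exp (l0 :: rest) (INR p / INR q)
               = wtail (INR p / INR q) (INR q / INR q) (l0 :: rest)).
  { unfold weight_exp; simpl wtail.
    replace (INR q / INR q) with 1 by (field; lra); rewrite Rmult_1_r; reflexivity. }
  rewrite dotR_diag, Hw.
  destruct (wtail_sums (l0 :: rest) p q (INR q) HqR Hne Hrest Hq Hcf) as [Hsum Hsq].
  rewrite Hsum, Hsq; split; [reflexivity | field; lra].
Qed.

Lemma sqrt_half x : 0 <= x -> sqrt (x / 2) = sqrt (2 * x) / 2.
Proof.
  intros Hx; replace (x / 2) with (2 * x / 2 ^ 2) by field.
  rewrite sqrt_div, sqrt_pow2 by lra; reflexivity.
Qed.

Lemma sqrt_mul_div x a D : 0 <= x -> 0 <= a -> 0 < D ->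
  sqrt x * sqrt a / D = sqrt (2 * x / D ^ 2) * sqrt (a / 2).
Proof.
  intros Hx Ha HD.
  rewrite sqrt_half, sqrt_div_alt, sqrt_pow2, !sqrt_mult_alt by nra.
  replace (sqrt 2 * sqrt x / D * (sqrt 2 * sqrt a / 2))
    with (sqrt 2 * sqrt 2 * (sqrt x * sqrt a) / (2 * D)) by (field; lra).
  rewrite sqrt_sqrt by lra; field; lra.
Qed.

Section ErrorVector.

Variables (d e : Z) (m : list Z) (ls : list nat) (a : R).
Hypothesis a_pos : 0 < a.
Hypothesis de_pos : (0 < d + e)%Z.
Hypothesis dotR_w_w : dotR (weight_exp ls a) (weight_exp ls a) = a.
Hypothesis dotR_m_m : dotR (zlistR m) (zlistR m) = 2 * IZR d * IZR e + 1.

Local Notation D := (IZR (d + e)).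
Local Notation c := (IZR (d + e) / sqrt (2 * a)).
Local Notation w := (weight_exp ls a).
Local Notation M := (zlistR m).
Local Notation eps := (err_vec d e m ls a).

Let D_pos : 0 < D.
Proof. apply IZR_lt; exact de_pos. Qed.

Let sqrt2a_pos : 0 < sqrt (2 * a).
Proof. apply sqrt_lt_R0; lra. Qed.

Lemma err_scale_mul : c * a = D * sqrt (a / 2).
Proof.
  rewrite sqrt_half by lra.
  pose proof (sqrt_sqrt (2 * a) ltac:(lra)); pose proof sqrt2a_pos.
  set (s := sqrt (2 * a)) in *; replace a with (s * s / 2) by lra; field; lra.
Qed.

Lemma err_scale_sqr_mul : c * c * a = D ^ 2 / 2.
Proof.
  pose proof (sqrt_sqrt (2 * a) ltac:(lra)); pose proof sqrt2a_pos.
  set (s := sqrt (2 * a)) in *; replace a with (s * s / 2) by lra; field; lra.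
Qed.

Lemma dotR_err_vec_w : dotR eps w = dotR M w - c * a.
Proof. unfold err_vec; rewrite dotR_subR_l, dotR_scale_l, dotR_w_w; reflexivity. Qed.

Lemma dotR_err_vec_diag : dotR eps eps = 2 * IZR d * IZR e + 1 - 2 * c * dotR M w + c * c * a.
Proof.
  unfold err_vec; rewrite !dotR_subR_l, !(dotR_comm _ (subR _ _)), !dotR_subR_l.
  rewrite !dotR_scale_l, !dotR_scale_r, (dotR_comm w M), dotR_w_w, dotR_m_m; ring.
Qed.

Lemma sumR_err_vec : sumR eps = sumR M - c * sumR w.
Proof. unfold err_vec; rewrite sumR_subR, sumR_scale; reflexivity. Qed.

Lemma opp_sumR_err_vec r : sumR M = 2 * D - 1 -> sumR w = a + 1 - r ->
  - sumR eps = c * (a + 1 - 2 * sqrt (2 * a) - r) + 1.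
Proof.
  intros Hsum_m Hsum_w; rewrite sumR_err_vec, Hsum_m, Hsum_w.
  pose proof sqrt2a_pos; field; lra.
Qed.

Lemma mu_le : mu d e m ls a <= sqrt (2 * IZR d * IZR e + 1) * sqrt a / D.
Proof.
  unfold mu; apply Rmult_le_compat_r; [left; apply Rinv_0_lt_compat; exact D_pos|].
  rewrite <- dotR_m_m; rewrite <- dotR_w_w at 2; apply dotR_cauchy_schwarz.
Qed.

Lemma mu_le_of_eq : e = d -> mu d e m ls a <= sqrt (1 + 1 / (2 * IZR d ^ 2)) * sqrt (a / 2).
Proof.
  intros Hed; pose proof mu_le as Hmu; pose proof D_pos as HD; subst e.
  rewrite plus_IZR in HD, Hmu; rewrite sqrt_mul_div in Hmu by nra.
  replace (2 * (2 * IZR d * IZR d + 1) / (IZR d + IZR d) ^ 2)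
    with (1 + 1 / (2 * IZR d ^ 2)) in Hmu by (field; lra); exact Hmu.
Qed.

Lemma mu_le_of_pred :
  e = (d - 1)%Z -> mu d e m ls a <= sqrt (1 + 1 / (2 * IZR d - 1) ^ 2) * sqrt (a / 2).
Proof.
  intros Hed; pose proof mu_le as Hmu; pose proof D_pos as HD; subst e.
  rewrite plus_IZR, minus_IZR in HD, Hmu.
  pose proof (pow2_ge_0 (2 * IZR d - 1)).
  rewrite sqrt_mul_div in Hmu by nra.
  replace (2 * (2 * IZR d * (IZR d - 1) + 1) / (IZR d + (IZR d - 1)) ^ 2)
    with (1 + 1 / (2 * IZR d - 1) ^ 2) in Hmu by (field; lra); exact Hmu.
Qed.

Lemma mu_gt_iff : mu d e m ls a > sqrt (a / 2) <-> dotR eps w > 0.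
Proof.
  rewrite dotR_err_vec_w, err_scale_mul; unfold mu, Rgt; split; intros H.
  - apply (Rmult_lt_compat_r D) in H; [|exact D_pos].
    replace (dotR M w / D * D) with (dotR M w) in H by (field; lra); lra.
  - apply (Rmult_lt_reg_r D); [exact D_pos|].
    replace (dotR M w / D * D) with (dotR M w) by (field; lra); lra.
Qed.

(* Above the threshold [<m, w> > c a], so [2 c <m, w> > 2 c^2 a = (d + e)^2], and
   [2de + 1 - (d + e)^2 / 2 = 1 - (d - e)^2 / 2]. *)
Lemma err_vec_norm_lt :
  mu d e m ls a > sqrt (a / 2) -> dotR eps eps < 1 - (IZR d - IZR e) ^ 2 / 2.
Proof.
  intros Hmu; apply mu_gt_iff in Hmu; rewrite dotR_err_vec_w in Hmu.
  rewrite dotR_err_vec_diag.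
  assert (Hc : 0 < c) by (apply Rdiv_lt_0_compat; assumption).
  assert (c * (c * a) < c * dotR M w) by (apply Rmult_lt_compat_l; lra).
  pose proof err_scale_sqr_mul; rewrite plus_IZR in *; nra.
Qed.

End ErrorVector.

Theorem lemma4p8 (p q : nat) (ls : list nat) (d e : Z) (m : list Z) :
  (0 < q)%nat -> (q <= p)%nat -> Nat.gcd p q = 1%nat ->
  is_cf ls (INR p / INR q) ->
  in_E d e m -> (0 < d + e)%Z ->
  let a := INR p / INR q in
  let w := weight_exp ls a in
  let eps := err_vec d e m ls a in
  let c := IZR (d + e) / sqrt (2 * a) in
  (* (i) *)
  (mu d e m ls a <= sqrt (2 * IZR d * IZR e + 1) * sqrt a / IZR (d + e) /\
   (e = d -> mu d e m ls a <= sqrt (1 + 1 / (2 * IZR d ^ 2)) * sqrt (a / 2)) /\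
   (e = (d - 1)%Z ->
      mu d e m ls a <= sqrt (1 + 1 / (2 * IZR d - 1) ^ 2) * sqrt (a / 2))) /\
  (* (ii) *)
  (mu d e m ls a > sqrt (a / 2) <-> dotR eps w > 0) /\
  (* (iii) *)
  ((e = d -> mu d e m ls a > sqrt (a / 2) -> dotR eps eps < 1) /\
   (e = (d - 1)%Z -> mu d e m ls a > sqrt (a / 2) -> dotR eps eps < 1 / 2)) /\
  (* (iv) *)
  (- sumR eps = c * ((a + 1 - 2 * sqrt (2 * a)) - 1 / INR q) + 1).
Proof.
  intros Hq Hqp Hgcd Hcf HE Hde a w eps c.
  destruct (in_E_sums d e m HE Hde) as [Hsum_m Hsq_m].
  assert (Ha : 0 < a) by (apply Rdiv_lt_0_compat; apply lt_0_INR; lia).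
  destruct (weight_exp_sums p q ls Hq Hcf) as [Hsum_w Hsq_w]; fold a in Hsum_w, Hsq_w.
  assert (Hsum_w' : sumR w = a + 1 - 1 / INR q).
  { unfold w; rewrite Hsum_w, Hgcd, INR_1; unfold a; field; apply not_0_INR; lia. }
  pose proof (err_vec_norm_lt d e m ls a Ha Hde Hsq_w Hsq_m) as Hnorm; fold eps in Hnorm.
  split; [split; [| split] | split; [| split; [split |]]].
  - apply (mu_le d e m ls a); assumption.
  - apply (mu_le_of_eq d e m ls a); assumption.
  - apply (mu_le_of_pred d e m ls a); assumption.
  - apply (mu_gt_iff d e m ls a); assumption.
  - intros -> Hgt; specialize (Hnorm Hgt); lra.
  - intros -> Hgt; specialize (Hnorm Hgt); rewrite minus_IZR in Hnorm; lra.
  - apply (opp_sumR_err_vec d e m ls a); assumption.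
Qed.
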